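(* Let $C=(1,c_2,c_3,c_4,c_5,c_6)=(1,c_2,2c_2,c_4,c_2+c_4,2c_4)$ be a system that is canonical and whose subsystem $(1,c_2,c_3,c_4,c_5)$ is noncanonical, and let $\ell=\lceil c_5/c_3\rceil$. Then $c_4\ge 3c_2-1$, $c_4\ne 3c_2$, $\mathrm{grd}_C(\ell c_3)\le\ell$, and $\mathrm{grd}_C(\ell c_3)=\ell c_3-c_5+1-\lfloor(\ell c_3-c_5)/c_2\rfloor(c_2-1)$.
   Context: A system is a tuple $C=(c_1,\dots,c_n)$ of integers with $1=c_1<c_2<\dots<c_n$; for $k\le n$, $(c_1,\dots,c_k)$ is a subsystem. For a positive integer $v$, $\mathrm{opt}_C(v)$ is the minimum of $\sum_i x_i$ over $x\in\mathbb{Z}_{\ge0}^n$ with $\sum_i c_ix_i=v$. The greedy representation of $v$ is produced by: for $i=n$ down to $1$, while $c_i\le$ remaining value, take a coin $c_i$. $\mathrm{grd}_C(v)$ is its number of coins. A positive integer $w$ is a counterexample if $\mathrm{opt}_C(w)<\mathrm{grd}_C(w)$; $C$ is canonical if it has none, noncanonical otherwise. *)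

From mathcomp Require Import all_boot all_order all_algebra.
Set Implicit Arguments. Unset Strict Implicit. Unset Printing Implicit Defensive.

Definition is_system (C : seq nat) : bool :=
  (0 < size C) && (nth 0 C 0 == 1) && sorted ltn C.

Definition is_rep (C : seq nat) (x : seq nat) (v : nat) : Prop :=
  size x = size C /\ \sum_(i < size C) nth 0 C i * nth 0 x i = v.

Definition ncoins (x : seq nat) : nat := \sum_(a <- x) a.

(* Greedy: from the largest coin down, take coin c_i while c_i <= remaining
   value; for c_i > 0 this takes (r %/ c_i) coins and leaves r %% c_i.
   Returns (remaining, number of coins taken). *)
Definition greedy_step (c : nat) (p : nat * nat) : nat * nat :=
  (p.1 %% c, p.2 + p.1 %/ c).

Definition grd (C : seq nat) (v : nat) : nat := (foldr greedy_step (v, 0) C).2.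

(* opt_C(w) < grd_C(w), unfolded: some representation of w uses fewer coins
   than the greedy one. *)
Definition counterexample (C : seq nat) (w : nat) : Prop :=
  0 < w /\ exists x, is_rep C x w /\ ncoins x < grd C w.

Definition canonical (C : seq nat) : Prop := forall w, ~ counterexample C w.

From mathcomp Require Import all_boot all_order all_algebra zify.
Import GRing.Theory Num.Theory.

Set Implicit Arguments.
Unset Strict Implicit.
Unset Printing Implicit Defensive.

(* Greedy spends the largest coin first, so for c5 <= w < min (c5 + c3, c6) it
   takes one c5 and pays w - c5 < c3 < c4 with c2's and 1's; l * c3 lies in this
   window (l * c3 < c6 needs c4 >= 3 c2 - 1), which gives the formula.  If c4 < 3 c2 - 1, then 3 c2 = c2 + c3 is paid with two
   coins, but greedy uses c4 and 3 c2 - c4 >= 2 ones.  The l coins c3 bound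
   grd_C (l * c3) by l.  If c4 = 3 c2, the subsystem is (1, c2, 2 c2, 3 c2, 4 c2),
   canonical because (1, 2, 3, 4) is: prefixing 1 to a scaled canonical system
   keeps it canonical, as greedy on a * D treats w %/ a like D does and leaves
   w %% a to the 1's. *)

Definition grd_rem (C : seq nat) (v : nat) : nat := (foldr greedy_step (v, 0) C).1.

Lemma foldr_greedy_step C v k :
  foldr greedy_step (v, k) C = (grd_rem C v, k + grd C v).
Proof.
rewrite /grd_rem /grd; elim: C => [|c C IH] /=; first by rewrite addn0.
by rewrite IH /greedy_step /= addnA.
Qed.

Lemma grd0 C : grd C 0 = 0.
Proof.
rewrite /grd; suff -> : foldr greedy_step (0, 0) C = (0, 0) by [].
by elim: C => //= c C ->; rewrite /greedy_step /= mod0n div0n.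
Qed.

Lemma grd_rcons C c v : grd (rcons C c) v = v %/ c + grd C (v %% c).
Proof. by rewrite /grd foldr_rcons [greedy_step c _]/greedy_step foldr_greedy_step add0n. Qed.

Lemma grd_rcons_small C c v : v < c -> grd (rcons C c) v = grd C v.
Proof. by move=> v_lt_c; rewrite grd_rcons divn_small // modn_small. Qed.

Lemma grd_rcons_once C c v :
  c <= v -> v - c < c -> grd (rcons C c) v = (grd C (v - c)).+1.
Proof.
move=> c_le_v small; have c_gt0 : 0 < c by lia.
have def_v : v = 1 * c + (v - c) by rewrite mul1n subnKC.
by rewrite grd_rcons {1 2}def_v divnMDl // modnMDl divn_small // modn_small.
Qed.

Lemma grd1 v : grd [:: 1] v = v.
Proof. by rewrite /grd /= /greedy_step /= divn1. Qed.

Lemma grd_cons1 C v : grd (1 :: C) v = grd C v + grd_rem C v.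
Proof. by rewrite /grd /= foldr_greedy_step /greedy_step /= divn1 add0n. Qed.

Lemma grd_rem_cons1 C v : grd_rem (1 :: C) v = 0.
Proof. by rewrite /grd_rem /= /greedy_step /= modn1. Qed.

Lemma greedy_step_scale a d n s k : s < a ->
  greedy_step (a * d) (a * n + s, k) = (a * (n %% d) + s, k + n %/ d).
Proof.
move=> s_lt_a; rewrite /greedy_step /=.
have [->|d_gt0] := posnP d; first by rewrite muln0 modn0 divn0 addn0.
have split_n : a * n + s = n %/ d * (a * d) + (a * (n %% d) + s).
  by rewrite {1}(divn_eq n d) mulnDr addnA mulnCA mulnC.
have rem_lt : a * (n %% d) + s < a * d.
  by have := leq_mul (leqnn a) (ltn_pmod n d_gt0); rewrite mulnS; lia.
have ad_gt0 : 0 < a * d by lia.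
by rewrite split_n divnMDl // modnMDl (divn_small rem_lt) (modn_small rem_lt) addn0.
Qed.

Lemma foldr_greedy_scale a C n s : s < a ->
  foldr greedy_step (a * n + s, 0) (map (muln a) C) = (a * grd_rem C n + s, grd C n).
Proof.
move=> s_lt_a; rewrite /grd_rem /grd.
by elim: C => [|c C IH] //=; rewrite IH greedy_step_scale.
Qed.

Lemma grd_scale a D n s : s < a ->
  grd (1 :: map (muln a) (1 :: D)) (a * n + s) = grd (1 :: D) n + s.
Proof.
move=> s_lt_a; rewrite grd_cons1 /grd_rem {1}/grd foldr_greedy_scale //=.
by rewrite -/(grd_rem _ _) grd_rem_cons1 muln0.
Qed.

Definition value (C x : seq nat) : nat := \sum_(i < size C) nth 0 C i * nth 0 x i.

Lemma value_cons c C x0 x : value (c :: C) (x0 :: x) = c * x0 + value C x.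
Proof. by rewrite /value big_ord_recl. Qed.

Lemma value_scale a C x : value (map (muln a) C) x = a * value C x.
Proof.
rewrite /value big_distrr size_map /=; apply: eq_bigr => i _.
by rewrite (nth_map 0) ?mulnA.
Qed.

Lemma ncoins_cons x0 x : ncoins (x0 :: x) = x0 + ncoins x.
Proof. by rewrite /ncoins big_cons. Qed.

Lemma grd_le_ncoins C x v : canonical C -> is_rep C x v -> grd C v <= ncoins x.
Proof.
move=> canC rep_x; have [->|v_gt0] := posnP v; first by rewrite grd0.
by rewrite leqNgt; apply/negP => fewer; apply: (canC v); split; last exists x.
Qed.

Lemma rep_mul_coin (C : seq nat) (c k : nat) :
  c \in C -> exists2 x, is_rep C x (k * c) & ncoins x = k.
Proof.
move=> c_in; have i_lt : index c C < size C by rewrite index_mem.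
exists (mkseq (fun j => if j == index c C then k else 0) (size C)).
  split; first by rewrite size_mkseq.
  rewrite (eq_bigr (fun j : 'I_(size C) => if j == index c C :> nat then k * nth 0 C j else 0)).
    by rewrite -big_mkcond (big_ord1_eq _ (fun j => k * nth 0 C j)) i_lt nth_index.
  by move=> j _; rewrite nth_mkseq //; case: eqP; rewrite ?muln0 // mulnC.
rewrite /ncoins big_map -(subn0 (size C)) -/(index_iota 0 _) big_mkord -big_mkcond.
by rewrite (big_ord1_eq _ (fun=> k)) i_lt.
Qed.

Lemma canonical_grd_mul C c k : canonical C -> c \in C -> grd C (k * c) <= k.
Proof.
move=> canC /(rep_mul_coin k)[x rep_x ncoins_x].
by rewrite -[leqRHS]ncoins_x; exact: grd_le_ncoins canC rep_x.
Qed.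

Lemma canonical_scale a D :
  0 < a -> canonical (1 :: D) -> canonical (1 :: map (muln a) (1 :: D)).
Proof.
move=> a_gt0 canD w [_ [[|x0 [|x1 y]] [[sz_x val_x] fewer]]] //.
move: val_x fewer; rewrite -/(value _ _) !value_cons value_scale.
set q := x0 %/ a; set s := x0 %% a; set n := q + x1 + value D y.
have s_lt_a : s < a by rewrite ltn_mod.
have def_w : 1 * x0 + (a * 1 * x1 + a * value D y) = a * n + s.
  by rewrite /n {1}(divn_eq x0 a); lia.
move=> <-; rewrite def_w grd_scale // !ncoins_cons; apply/negP; rewrite -leqNgt.
(* Of the x0 = q * a + s unit coins, q * a pay for q units of n. *)
have rep_n : is_rep (1 :: D) ((q + x1) :: y) n.
  split; first by move: sz_x; rewrite /= size_map => -[->].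
  by rewrite -/(value _ _) value_cons mul1n.
have := grd_le_ncoins canD rep_n; rewrite ncoins_cons.
have := leq_pmulr q a_gt0; have := divn_eq x0 a; lia.
Qed.

Lemma canonical_1234 : canonical [:: 1; 2; 3; 4].
Proof.
move=> w [_ [x [[sz_x val_x] fewer]]].
case: x sz_x val_x fewer => [|x1 [|x2 [|x3 [|x4 [|]]]]] // _ <-.
rewrite /ncoins /grd !big_ord_recl big_ord0 !big_cons big_nil /= /greedy_step /=.
set v := 1 * x1 + _; have : v %% 4 < 4 by rewrite ltn_mod.
have := divn_eq v 4; case: (v %% 4) => [|[|[|[|]]]] //=; lia.
Qed.

Lemma canonical_scale_1234 a : 0 < a -> canonical [:: 1; a; 2 * a; 3 * a; a + 3 * a].
Proof.
move=> a_gt0; have -> : [:: 1; a; 2 * a; 3 * a; a + 3 * a] = 1 :: map (muln a) [:: 1; 2; 3; 4].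
  by rewrite /= muln1 -mulSn (mulnC a 2) (mulnC a 3) (mulnC a 4).
exact: canonical_scale canonical_1234.
Qed.

Lemma ceil_divn_bounds n d : 0 < d -> n <= (n + d - 1) %/ d * d < n + d.
Proof.
move=> d_gt0; have := divn_eq (n + d - 1) d.
have : (n + d - 1) %% d < d by rewrite ltn_mod.
lia.
Qed.

Section SixCoinSystem.

Variables c2 c4 : nat.
Hypothesis c3_lt_c4 : 2 * c2 < c4.

Local Notation C := [:: 1; c2; 2 * c2; c4; c2 + c4; 2 * c4].

Let C_rcons :
  C = rcons (rcons (rcons (rcons (rcons [:: 1] c2) (2 * c2)) c4) (c2 + c4)) (2 * c4).
Proof. by []. Qed.

Lemma grd_triple_c2 : c4 < 3 * c2 - 1 -> grd C (3 * c2) = (3 * c2 - c4).+1.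
Proof.
move=> c4_lt; rewrite C_rcons grd_rcons_small; last lia.
rewrite grd_rcons_small; last lia.
rewrite grd_rcons_once; [|lia|lia].
rewrite grd_rcons_small; last lia.
by rewrite grd_rcons_small ?grd1; lia.
Qed.

Lemma canonical_c4_ge : canonical C -> 3 * c2 - 1 <= c4.
Proof.
move=> canC; rewrite leqNgt; apply/negP => c4_lt.
have rep : is_rep C [:: 0; 1; 1; 0; 0; 0] (3 * c2).
  by split=> //; rewrite !big_ord_recl big_ord0 /=; lia.
by have := grd_le_ncoins canC rep; rewrite grd_triple_c2 // /ncoins !big_cons big_nil; lia.
Qed.

Lemma mul_c3_lt_c6 k :
  3 * c2 - 1 <= c4 -> k * (2 * c2) < c2 + c4 + 2 * c2 -> k * (2 * c2) < 2 * c4.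
Proof.
move=> c4_ge kc3_lt; have [|c4_lt] := leqP (3 * c2) c4; first lia.
have c3_gt0 : 0 < 2 * c2 by lia.
have k_le2 : k <= 2 by rewrite -ltnS -(ltn_pmul2r c3_gt0); lia.
by have := leq_mul k_le2 (leqnn (2 * c2)); lia.
Qed.

Lemma grd_above_c5 w :
  c2 + c4 <= w -> w < c2 + c4 + 2 * c2 -> w < 2 * c4 ->
  grd C w = ((w - (c2 + c4)) %/ c2 + (w - (c2 + c4)) %% c2).+1.
Proof.
move=> c5_le_w w_lt w_lt_c6; rewrite C_rcons grd_rcons_small //.
rewrite grd_rcons_once; [|lia|lia].
rewrite grd_rcons_small; last lia.
by rewrite grd_rcons_small ?grd_rcons ?grd1 ?addnS; lia.
Qed.

End SixCoinSystem.

Theorem lemma10 (c2 c4 : nat) :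
  let C := [:: 1; c2; 2 * c2; c4; c2 + c4; 2 * c4] in
  let c3 := 2 * c2 in
  let c5 := c2 + c4 in
  let l := (c5 + c3 - 1) %/ c3 in
  is_system C ->
  canonical C ->
  ~ canonical (take 5 C) ->
  [/\ 3 * c2 - 1 <= c4,
      c4 != 3 * c2,
      grd C (l * c3) <= l &
      (grd C (l * c3) : int) =
        ((l * c3)%:Z - c5%:Z + 1 - ((l * c3 - c5) %/ c2)%:Z * (c2%:Z - 1))%R].
Proof.
move=> C c3 c5 l sysC canC noncan5.
have [c2_gt0 c3_lt_c4] : 0 < c2 /\ c3 < c4.
  by move: sysC; rewrite /is_system /= andbT => /and5P[/ltnW].
have c4_ge := canonical_c4_ge c3_lt_c4 canC.
have c4_neq : c4 != 3 * c2.
  by apply/eqP => c4E; apply: noncan5; rewrite /= c4E; apply: canonical_scale_1234.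
have c3_gt0 : 0 < c3 by rewrite muln_gt0.
have /andP[c5_le_w w_lt] : c5 <= l * c3 < c5 + c3 := ceil_divn_bounds c5 c3_gt0.
have grd_w := grd_above_c5 c3_lt_c4 c5_le_w w_lt (mul_c3_lt_c6 c3_lt_c4 c4_ge w_lt).
split=> //; first by apply: canonical_grd_mul canC _; rewrite !inE eqxx !orbT.
by rewrite grd_w -/c5; have := divn_eq (l * c3 - c5) c2; lia.
Qed.
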